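(* Consider the algorithm LaCAM$^\ast$ described in the context below, run without interruption, on an MAPF instance $(G,A,\mathcal{S},\mathcal{G})$ with a nonnegative transition cost $c_e$ and an admissible heuristic $h$, using any agent-ordering rule and any valid configuration generator. Then the algorithm terminates after finitely many iterations, and: if the instance has a solution, it returns a solution $\Pi$ that is optimal, i.e. $c(\Pi)\le c(\Pi')$ for every solution $\Pi'$; if the instance has no solution, it returns NO_SOLUTION. (That is, LaCAM$^\ast$ is complete and optimal.)
   Context: **MAPF.** $G=(V,E)$ is a finite undirected graph; $N(v)$ denotes the set of neighbours of $v\in V$. Agents are $A=\{1,\dots,n\}$; starts $\mathcal{S}=(s_1,\dots,s_n)$ and goals $\mathcal{G}=(g_1,\dots,g_n)$ are tuples of pairwise distinct vertices. A configuration is $Q\in V^n$, $Q[i]$ being the location of agent $i$. Configurations $X,Y$ are *connected* if $Y[i]\in N(X[i])\cup\{X[i]\}$ for all $i$, there is no $i\ne j$ with $Y[i]=Y[j]$ or $X[i]=X[j]$ (no vertex collision), and there is no $i\neq j$ with $X[i]=Y[j]$ and $Y[i]=X[j]$ (no edge collision). A *solution* is a sequence $\Pi=(Q_0,\dots,Q_k)$ with $Q_0=\mathcal{S}$, $Q_k=\mathcal{G}$ and $Q_t,Q_{t+1}$ connected for all $t$. Given a transition cost $c_e:V^n\times V^n\to\mathbb{R}_{\ge0}$, the cost of $\Pi$ is $c(\Pi)=\sum_{t=0}^{k-1}c_e(Q_t,Q_{t+1})$. A heuristic $h:V^n\to\mathbb{R}_{\ge 0}$ is *admissible* if $h(Q)$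 is at most the minimum cost of a sequence of consecutively connected configurations from $Q$ to $\mathcal{G}$ (for every $Q$ from which $\mathcal{G}$ is reachable; in particular $h(\mathcal{G})=0$). **Constraints.** A constraint node $C$ is either the root $C_{\mathrm{init}}$ or a triple $\langle \mathrm{parent}:C',\ \mathrm{who}:i,\ \mathrm{where}:u\rangle$ with $C'$ a constraint node, $i\in A$, $u\in V$. The constraint set of $C$ is the set of pairs $(i,u)$ collected along the parent chain to the root; $\mathrm{depth}(C)$ is its size ($\mathrm{depth}(C_{\mathrm{init}})=0$). **Ingredients.** An *agent-ordering rule* assigns to each generated high-level node an arbitrary permutation $\mathrm{order}$ of $A$. A *valid configuration generator* is a function that, given a configuration $Q$ and a constraint node $C$, returns either $\bot$ or a configuration $Q'$ connected to $Q$ with $Q'[i]=u$ for all $(i,u)$ in the constraint set of $C$; moreover, whenever the constraint set of $C$ assigns a location to every agent and the resulting configuration is connected to $Q$, it does not return $\bot$ (hence returns exactly that configuration). **High-level nodes.** A node $\mathcal{N}$ stores: $\mathrm{config}$ (a configuration), $\mathrm{tree}$ (a FIFO queue of constraint nodes), $\mathrm{parent}$ (a node or $\bot$), $\mathrm{neighbors}$ (a list of nodes), $g\in\mathbb{R}_{\ge0}$, and $\mathrm{order}$. Write $f(\mathcal{N})=\mathcal{N}.g+h(\mathcal{N}.\mathrm{config})$ and $c_e(\mathcal{N},\mathcal{N}')=c_e(\mathcal{N}.\mathrm{config},\mathcal{N}'.\mathrm{config})$. **Algorithm LaCAM$^\ast$.** OPEN is a stack (LIFO), EXPLORED a map from configurations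 to nodes, $\mathcal{N}_{\mathrm{goal}}:=\bot$. Create $\mathcal{N}_{\mathrm{init}}$ with config $\mathcal{S}$, tree $[C_{\mathrm{init}}]$, parent $\bot$, neighbors $\emptyset$, $g=0$; push it on OPEN and set EXPLORED$[\mathcal{S}]=\mathcal{N}_{\mathrm{init}}$. While OPEN is nonempty: 1. Let $\mathcal{N}$ be the top of OPEN (not removed). If $\mathcal{N}.\mathrm{config}=\mathcal{G}$, set $\mathcal{N}_{\mathrm{goal}}:=\mathcal{N}$. 2. If $\mathcal{N}_{\mathrm{goal}}\ne\bot$ and $f(\mathcal{N}_{\mathrm{goal}})\le f(\mathcal{N})$, pop OPEN and continue. 3. If $\mathcal{N}.\mathrm{tree}$ is empty, pop OPEN and continue. 4. Dequeue $C$ from $\mathcal{N}.\mathrm{tree}$. If $\mathrm{depth}(C)<n$, let $i=\mathcal{N}.\mathrm{order}[\mathrm{depth}(C)+1]$ and, for each $u\in N(\mathcal{N}.\mathrm{config}[i])\cup\{\mathcal{N}.\mathrm{config}[i]\}$, enqueue $\langle C,i,u\rangle$ into $\mathcal{N}.\mathrm{tree}$. 5. Let $Q_{\mathrm{new}}$ be the generator's output on $(\mathcal{N}.\mathrm{config},C)$; if $\bot$, continue. 6. If EXPLORED$[Q_{\mathrm{new}}]$ is defined: append it to $\mathcal{N}.\mathrm{neighbors}$; then run a Dijkstra update: $D$ is a min-priority queue on $g$ initialized with $\mathcal{N}$; while $D\ne\emptyset$, pop $\mathcal{N}_{\mathrm{from}}$ and for each $\mathcal{N}_{\mathrm{to}}\in\mathcal{N}_{\mathrm{from}}.\mathrm{neighbors}$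 let $g'=\mathcal{N}_{\mathrm{from}}.g+c_e(\mathcal{N}_{\mathrm{from}},\mathcal{N}_{\mathrm{to}})$; if $g'<\mathcal{N}_{\mathrm{to}}.g$, set $\mathcal{N}_{\mathrm{to}}.g:=g'$, $\mathcal{N}_{\mathrm{to}}.\mathrm{parent}:=\mathcal{N}_{\mathrm{from}}$, push $\mathcal{N}_{\mathrm{to}}$ into $D$, and if moreover $\mathcal{N}_{\mathrm{goal}}\neq\bot$ and $f(\mathcal{N}_{\mathrm{to}})<f(\mathcal{N}_{\mathrm{goal}})$, push $\mathcal{N}_{\mathrm{to}}$ onto OPEN. 7. Otherwise create $\mathcal{N}_{\mathrm{new}}$ with config $Q_{\mathrm{new}}$, tree $[C_{\mathrm{init}}]$, parent $\mathcal{N}$, neighbors $\emptyset$, $g=\mathcal{N}.g+c_e(\mathcal{N}.\mathrm{config},Q_{\mathrm{new}})$, order given by the ordering rule; push it on OPEN, set EXPLORED$[Q_{\mathrm{new}}]=\mathcal{N}_{\mathrm{new}}$, and append $\mathcal{N}_{\mathrm{new}}$ to $\mathcal{N}.\mathrm{neighbors}$. When OPEN is empty: if $\mathcal{N}_{\mathrm{goal}}\ne\bot$, return the sequence of configurations obtained by following parent pointers from $\mathcal{N}_{\mathrm{goal}}$ back to $\mathcal{N}_{\mathrm{init}}$, reversed; otherwise return NO_SOLUTION. *)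

(* Formal model of the LaCAM* algorithm as a small-step
   (nondeterministic) transition system. *)
From HB Require Import structures.
From mathcomp Require Import all_boot all_order all_algebra perm.
Import Order.TTheory GRing.Theory Num.Theory.
Local Open Scope ring_scope.

Section LaCAM.

(* Graph G = (V,E): finite vertex type, adjacency relation [adj] (N(v) = [adj v]). *)
Variables (V : finType) (adj : rel V).
(* n agents, indexed by 'I_n (agent k+1 of the paper is the ordinal k). *)
Variable (n : nat).
Variable (R : realFieldType).

Definition config := {ffun 'I_n -> V}.

(* A constraint node, represented by the list of pairs (who, where) collected
   along the parent chain (most recent first); the root C_init is [::].
   <parent: C, who: i, where: u> is ((i,u) :: C). *)
Definition cnode := seq ('I_n * V).

Definition depth (C : cnode) : nat := size (undup C).

Definition connected (X Y : config) : bool :=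
  [forall i, (Y i == X i) || adj (X i) (Y i)] &&
  [forall i, forall j, (i != j) ==>
     [&& Y i != Y j, X i != X j & ~~ ((X i == Y j) && (Y i == X j))]].

Definition closed_nbhd (v : V) : seq V := [seq u <- enum V | adj v u || (u == v)].

Variable (ce : config -> config -> R).

Fixpoint pcost (x : config) (s : seq config) : R :=
  match s with
  | [::] => 0
  | y :: s' => ce x y + pcost y s'
  end.

Definition cost (p : seq config) : R :=
  match p with [::] => 0 | q :: r => pcost q r end.

Variables (S G : config).

Definition is_solution (p : seq config) : Prop :=
  match p with
  | [::] => False
  | q :: r => q = S /\ last q r = G /\ path connected q r
  end.

Variable (h : config -> R).

(* admissibility: h(Q) is at most the cost of every sequence of consecutively
   connected configurations from Q to G (hence at most the minimum cost);
   nonnegativity of h is a separate hypothesis of the theorem. *)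
Definition admissible : Prop :=
  forall (Q : config) (p : seq config),
    path connected Q p -> last Q p = G -> h Q <= pcost Q p.

Definition valid_generator (gen : config -> cnode -> option config) : Prop :=
  forall (Q : config) (C : cnode),
    (forall Q' : config, gen Q C = Some Q' ->
        connected Q Q' /\ (forall i u, (i, u) \in C -> Q' i = u)) /\
    (forall Q' : config, (forall i u, ((i, u) \in C) = (Q' i == u)) ->
        connected Q Q' -> gen Q C <> None).

Variable (gen : config -> cnode -> option config).

(* High-level node; a node is identified by its configuration, which is its
   key in EXPLORED (the map is injective on nodes). *)
Record node := Node {
  ntree : seq cnode;          (* FIFO queue, head = front *)
  nparent : option config;
  nnbrs : seq config;
  ng : R;
  norder : {perm 'I_n} }.      (* order[k+1] of the paper = norder k *)

Definition explored := config -> option node.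

Inductive phase :=
| Main                       (* at the head of the main while loop *)
| Dijk of seq config.        (* inside the Dijkstra update, with queue D *)

Record state := St {
  sexp : explored;
  sopen : seq config;        (* stack; head = top *)
  sgoal : option config;
  sphase : phase }.

Definition g_of (ex : explored) (q : config) : R :=
  if ex q is Some N then ng N else 0.
Definition f_of (ex : explored) (q : config) : R := g_of ex q + h q.
Definition nbrs_of (ex : explored) (q : config) : seq config :=
  if ex q is Some N then nnbrs N else [::].

Definition upd (ex : explored) (q : config) (N : node) : explored :=
  fun x => if x == q then Some N else ex x.

Definition set_tree (N : node) (t : seq cnode) : node :=
  Node t (nparent N) (nnbrs N) (ng N) (norder N).
Definition add_nbr (N : node) (q : config) : node :=
  Node (ntree N) (nparent N) (rcons (nnbrs N) q) (ng N) (norder N).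
Definition set_gp (N : node) (g : R) (p : config) : node :=
  Node (ntree N) (Some p) (nnbrs N) g (norder N).

Definition newgoal (q : config) (goal : option config) : option config :=
  if q == G then Some q else goal.

Definition stop_cond (ex : explored) (q : config) (goal : option config) : bool :=
  if goal is Some qg then f_of ex qg <= f_of ex q else false.

(* step 4: agent order[depth(C)+1] if depth(C) < n *)
Definition child_agent (N : node) (C : cnode) : option 'I_n :=
  omap (norder N) (insub (depth C) : option 'I_n).

(* children <C,i,u> enqueued in step 4, for u ranging over [us]
   (an arbitrary enumeration of N(Q[i]) \cup {Q[i]}) *)
Definition children (N : node) (C : cnode) (us : seq V) : seq cnode :=
  if child_agent N C is Some i then [seq (i, u) :: C | u <- us] else [::].

Definition children_ok (N : node) (q : config) (C : cnode) (us : seq V) : Prop :=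
  if child_agent N C is Some i then perm_eq us (closed_nbhd (q i)) else True.

(* processing of one N_to in the Dijkstra update, N_from = qf *)
Definition relax (goal : option config) (qf : config)
    (acc : explored * seq config * seq config) (qt : config)
    : explored * seq config * seq config :=
  let: (ex, D, op) := acc in
  match ex qt with
  | None => acc
  | Some Nt =>
    let g' := g_of ex qf + ce qf qt in
    if g' < ng Nt then
      let ex' := upd ex qt (set_gp Nt g' qf) in
      let op' := if goal is Some qg then
                   (if f_of ex' qt < f_of ex' qg then qt :: op else op)
                 else op in
      (ex', qt :: D, op')
    else acc
  end.

Definition dijk_res (ex : explored) (op : seq config) (goal : option config)
    (D : seq config) (qf : config) :=
  foldl (relax goal qf) (ex, rem qf D, op) (nbrs_of ex qf).

(* one step of the algorithm: one iteration of the main loop, or one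
   iteration of the while loop of the Dijkstra update (or its exit).
   Nondeterminism: the order of a new node (arbitrary agent-ordering rule),
   the enumeration order of N(v) \cup {v} in step 4, and the tie-breaking
   among minimal elements of the priority queue D. *)
Inductive lstep : state -> state -> Prop :=
| step_pop ex q op goal N :
    ex q = Some N ->
    stop_cond ex q (newgoal q goal) \/ ntree N = [::] ->
    lstep (St ex (q :: op) goal Main) (St ex op (newgoal q goal) Main)
| step_nogen ex q op goal N C tr us :
    ex q = Some N -> ~~ stop_cond ex q (newgoal q goal) ->
    ntree N = C :: tr -> children_ok N q C us ->
    gen q C = None ->
    lstep (St ex (q :: op) goal Main)
          (St (upd ex q (set_tree N (tr ++ children N C us)))
              (q :: op) (newgoal q goal) Main)
| step_old ex q op goal N C tr us qn :
    ex q = Some N -> ~~ stop_cond ex q (newgoal q goal) ->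
    ntree N = C :: tr -> children_ok N q C us ->
    gen q C = Some qn ->
    upd ex q (set_tree N (tr ++ children N C us)) qn <> None ->
    lstep (St ex (q :: op) goal Main)
          (St (upd ex q (add_nbr (set_tree N (tr ++ children N C us)) qn))
              (q :: op) (newgoal q goal) (Dijk [:: q]))
| step_new ex q op goal N C tr us qn (sigma : {perm 'I_n}) :
    ex q = Some N -> ~~ stop_cond ex q (newgoal q goal) ->
    ntree N = C :: tr -> children_ok N q C us ->
    gen q C = Some qn ->
    upd ex q (set_tree N (tr ++ children N C us)) qn = None ->
    lstep (St ex (q :: op) goal Main)
          (St (upd (upd ex q (add_nbr (set_tree N (tr ++ children N C us)) qn))
                   qn (Node [:: [::]] (Some q) [::] (ng N + ce q qn) sigma))
              (qn :: q :: op) (newgoal q goal) Main)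
| step_dijk ex op goal D qf :
    qf \in D -> (forall x, x \in D -> g_of ex qf <= g_of ex x) ->
    lstep (St ex op goal (Dijk D))
          (St (dijk_res ex op goal D qf).1.1 (dijk_res ex op goal D qf).2
              goal (Dijk (dijk_res ex op goal D qf).1.2))
| step_dijk_end ex op goal :
    lstep (St ex op goal (Dijk [::])) (St ex op goal Main).

Definition init_state (sigma0 : {perm 'I_n}) : state :=
  St (fun x => if x == S then Some (Node [:: [::]] None [::] 0 sigma0) else None)
     [:: S] None Main.

Inductive reach (s : state) : state -> Prop :=
| reach0 : reach s s
| reachS t u : reach s t -> lstep t u -> reach s u.

(* OPEN is empty: the algorithm stops and returns *)
Definition final (s : state) : Prop := sphase s = Main /\ sopen s = [::].

(* backchain ex q l: l is the list of configurations met by following parent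
   pointers from (the node of) q back to N_init (the node of S). The returned
   solution is rev l. *)
Inductive backchain (ex : explored) : config -> seq config -> Prop :=
| bc_init : backchain ex S [:: S]
| bc_step q N p l : q != S -> ex q = Some N -> nparent N = Some p ->
    backchain ex p l -> backchain ex q (q :: l).

Definition output_correct (s : state) : Prop :=
  match sgoal s with
  | None => (* returns NO_SOLUTION *) ~ (exists p, is_solution p)
  | Some qg => exists l, backchain (sexp s) qg l /\ is_solution (rev l) /\
                 forall p', is_solution p' -> cost (rev l) <= cost p'
  end.

End LaCAM.

(* The proof rests on
   an invariant [state_inv] of all reachable states, made of two parts:
   - [search_inv]: every g-value is realised by a duplicate-free walk from S
     and is at least the g of the parent plus the transition cost ([g_inv]);
     the constraint trees are consistent with the agent orders; neighbours
     are explored and relaxed unless waiting in the Dijkstra queue; and every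
     configuration connected to a node is a neighbour or still satisfies a
     constraint node of its tree ([inv_cover]);
   - [open_inv]: a node that left OPEN has an exhausted tree or was cut by
     step 2, N_goal is G, and G stays in OPEN until it becomes N_goal.
   Termination: each step decreases lexicographically (number of unexplored
   configurations, sum of the ranks of the g-values among the finitely many
   costs of duplicate-free walks, sum of the tree weights, |OPEN|, |D| + 1).
   Progress: a state with nonempty OPEN or in the Dijkstra loop can step.
   Correctness: when OPEN is empty, exhausted trees mean that all successors
   were generated (the generator is complete on full constraints) and
   relaxed; together with admissibility at nodes cut by step 2 this bounds
   g(G) by the cost of any solution, and the parent chain of N_goal is a
   solution of cost at most g(G).  Without N_goal, G is unreachable. *)

From HB Require Import structures.
From mathcomp Require Import all_boot all_order all_algebra perm.
Import Order.TTheory GRing.Theory Num.Theory.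
Local Open Scope ring_scope.
Set Implicit Arguments.
Unset Strict Implicit.

Arguments depth {V n}.
Arguments connected {V} adj {n}.
Arguments pcost {V n R} ce.
Arguments ntree {V n R}.
Arguments nparent {V n R}.
Arguments nnbrs {V n R}.
Arguments ng {V n R}.
Arguments norder {V n R}.
Arguments Node {V n R}.
Arguments g_of {V n R}.
Arguments f_of {V n R} h.
Arguments nbrs_of {V n R}.
Arguments upd {V n R}.
Arguments set_tree {V n R}.
Arguments add_nbr {V n R}.
Arguments set_gp {V n R}.
Arguments newgoal {V n} G.
Arguments stop_cond {V n R} h.
Arguments child_agent {V n R}.
Arguments children {V n R}.
Arguments children_ok {V} adj {n R}.
Arguments relax {V n R} ce h goal qf acc qt : simpl never.
Arguments dijk_res {V n R} ce h.
Arguments St {V n R}.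
Arguments Main {V n}.
Arguments Dijk {V n}.
Arguments sexp {V n R}.
Arguments sopen {V n R}.
Arguments sgoal {V n R}.
Arguments sphase {V n R}.
Arguments backchain {V n R} S.
Arguments bc_init {V n R S ex}.
Arguments bc_step {V n R S ex q N p l}.
Arguments final {V n R}.
Arguments lstep {V} adj {n R} ce G h gen.
Arguments reach {V} adj {n R} ce G h gen.
Arguments init_state {V n R} S.
Arguments output_correct {V} adj {n R} ce S G.
Arguments is_solution {V} adj {n} S G.
Arguments cost {V n R} ce.
Arguments step_pop {V adj n R ce G h gen ex q op goal N}.
Arguments step_nogen {V adj n R ce G h gen ex q op goal N C tr us}.
Arguments step_old {V adj n R ce G h gen ex q op goal N C tr us qn}.
Arguments step_new {V adj n R ce G h gen ex q op goal N C tr us qn} sigma.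
Arguments step_dijk {V adj n R ce G h gen ex op goal D qf}.
Arguments step_dijk_end {V adj n R ce G h gen ex op goal}.

Definition lex5 (a b : nat * nat * nat * nat * nat) : Prop :=
  let: (a1, a2, a3, a4, a5) := a in let: (b1, b2, b3, b4, b5) := b in
  (a1 < b1)%N \/ (a1 = b1 /\ ((a2 < b2)%N \/ (a2 = b2 /\ ((a3 < b3)%N \/
     (a3 = b3 /\ ((a4 < b4)%N \/ (a4 = b4 /\ (a5 < b5)%N))))))).

Lemma lex5_acc (T : Type) (next : T -> T -> Prop) (P : T -> Prop)
    (mu : T -> nat * nat * nat * nat * nat) :
  (forall s t, P s -> next s t -> P t /\ lex5 (mu t) (mu s)) ->
  forall s, P s -> Acc (fun t s => next s t) s.
Proof.
move=> hdec s hs; move: {2}(mu s) (erefl (mu s)) => [[[[a b] c] d] e].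
elim/ltn_ind: a b c d e s hs => a IHa; elim/ltn_ind => b IHb; elim/ltn_ind => c IHc.
elim/ltn_ind => d IHd; elim/ltn_ind => e IHe s hs hm.
constructor => t hst; have [ht] := hdec s t hs hst; rewrite hm.
case E: (mu t) => [[[[a' b'] c'] d'] e'] /=.
case=> [ha|[ea [hb|[eb [hc|[ec [hd|[ed he]]]]]]]]; subst.
- exact: IHa ha b' c' d' e' t ht E.
- exact: IHb hb c' d' e' t ht E.
- exact: IHc hc d' e' t ht E.
- exact: IHd hd e' t ht E.
- exact: IHe he t ht E.
Qed.

Section Search.
Variables (V : finType) (adj : rel V) (n : nat) (R : realFieldType).
Variables (S G : config V n) (ce : config V n -> config V n -> R).
Variables (h : config V n -> R) (gen : config V n -> cnode V n -> option (config V n)).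
Hypothesis ce_ge0 : forall X Y, 0 <= ce X Y.
Hypothesis h_ge0 : forall Q, 0 <= h Q.
Hypothesis hadm : admissible V adj n R ce G h.
Hypothesis hgen : valid_generator V adj n gen.

Local Notation cfg := (config V n).
Local Notation node := (node V n R).
Local Notation explored := (explored V n R).
Local Notation pc := (pcost ce).
Local Notation conn := (connected adj).
Implicit Types (ex : explored) (x y p q : cfg) (w : seq cfg) (N : node).

Lemma pcost_cat x s1 s2 : pc x (s1 ++ s2) = pc x s1 + pc (last x s1) s2.
Proof. by elim: s1 x => [|y s1 IH] x /=; rewrite ?add0r // IH addrA. Qed.

Lemma pcost_rcons x w y : pc x (rcons w y) = pc x w + ce (last x w) y.
Proof. by rewrite -cats1 pcost_cat /= addr0. Qed.

Lemma pcost_ge0 x w : 0 <= pc x w.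
Proof. by elim: w x => [|y w IH] x //=; rewrite addr_ge0. Qed.

Lemma pcost_take x w k : pc x (take k w) <= pc x w.
Proof. by rewrite -{2}(cat_take_drop k w) pcost_cat lerDl pcost_ge0. Qed.

Lemma mem_last_take x w y : y \in x :: w ->
  exists2 k, (k <= size w)%N & last x (take k w) = y.
Proof.
elim: w x => [|z w IH] x; first by rewrite inE => /eqP ->; exists 0%N.
rewrite inE => /orP [/eqP ->|/IH [k hk hl]]; first by exists 0%N.
by exists k.+1.
Qed.

Lemma updE ex q N x : upd ex q N x = if x == q then Some N else ex x.
Proof. by []. Qed.

Lemma updP ex q N x M : upd ex q N x = Some M ->
  (x = q /\ M = N) \/ (x != q /\ ex x = Some M).
Proof.
rewrite updE; case: (eqVneq x q) => [->|hx]; first by move=> [<-]; left.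
by move=> ?; right.
Qed.

Lemma g_ofE ex x N : ex x = Some N -> g_of ex x = ng N.
Proof. by rewrite /g_of => ->. Qed.

Definition pot (F : option node -> nat) ex : nat := (\sum_(x : cfg) F (ex x))%N.

Lemma pot_upd F ex q N :
  (pot F (upd ex q N) + F (ex q) = pot F ex + F (Some N))%N.
Proof.
rewrite /pot [in LHS](bigD1 q) //= [in RHS](bigD1 q) //= updE eqxx.
rewrite (eq_bigr (fun x => F (ex x))) => [|x /negbTE hx]; last by rewrite updE hx.
by rewrite [LHS]addnC [RHS]addnC addnCA.
Qed.

Lemma pot_upd_eq F ex q N : F (Some N) = F (ex q) -> pot F (upd ex q N) = pot F ex.
Proof. by move=> e; apply/eqP; rewrite -(eqn_add2r (F (ex q))) pot_upd e. Qed.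

Lemma pot_upd_lt F ex q N : (F (Some N) < F (ex q))%N ->
  (pot F (upd ex q N) < pot F ex)%N.
Proof. by move=> lt; rewrite -(ltn_add2r (F (ex q))) pot_upd ltn_add2l. Qed.


(* Since g-values are costs of duplicate-free
   sequences, they range over a finite set, which bounds the number of times
   the Dijkstra updates can decrease them. *)
Definition realising_walk ex x w :=
  [/\ uniq (S :: w), last S w = x, pc S w = g_of ex x &
      forall k, (k <= size w)%N -> isSome (ex (last S (take k w))) /\
         g_of ex (last S (take k w)) <= pc S (take k w)].

Definition parent_ok ex x N := exists p,
  [/\ nparent N = Some p, isSome (ex p), conn p x & g_of ex p + ce p x <= ng N].

Record g_inv ex : Prop := GInv {
  start_explored : isSome (ex S);
  g_walk : forall x, isSome (ex x) -> exists w, realising_walk ex x w;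
  g_parent : forall x N, ex x = Some N -> x != S -> parent_ok ex x N;
  g_chain : forall x, isSome (ex x) -> exists l, backchain S ex x l }.

Lemma realising_walk_explored ex x w y :
  realising_walk ex x w -> y \in S :: w -> isSome (ex y).
Proof. by case=> _ _ _ H /mem_last_take [k hk <-]; case: (H k hk). Qed.

Lemma realising_walk_mono ex ex' x w : realising_walk ex x w ->
  (forall y, isSome (ex y) -> isSome (ex' y)) ->
  (forall y, isSome (ex y) -> g_of ex' y <= g_of ex y) ->
  g_of ex' x = g_of ex x -> realising_walk ex' x w.
Proof.
case=> hu hl hp H h1 h2 h3; split=> // [|k hk]; first by rewrite h3.
have [a b] := H k hk; split; first exact: h1.
exact: le_trans (h2 _ a) b.
Qed.

Lemma realising_walk_rcons ex p w q : realising_walk ex p w -> q \notin S :: w ->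
  isSome (ex q) -> g_of ex q = g_of ex p + ce p q ->
  realising_walk ex q (rcons w q).
Proof.
case=> hu hl hp H hq hs hg; split.
- by rewrite -rcons_cons rcons_uniq hq hu.
- by rewrite last_rcons.
- by rewrite pcost_rcons hl hp hg.
move=> k; rewrite size_rcons leq_eqVlt => /orP [/eqP ->|hk].
  by rewrite -(size_rcons w q) take_size last_rcons pcost_rcons hl hp hg.
by rewrite -cats1 takel_cat //; apply: H.
Qed.

Lemma realising_walk_start ex w : realising_walk ex S w -> w = [::].
Proof.
case: w => [//|y w] [/= /andP [hS _] hl _ _]; move: hS.
by rewrite -{1}hl mem_last.
Qed.

Lemma g_start ex : g_inv ex -> g_of ex S = 0.
Proof.
move=> gi; have [w hw] := g_walk gi (start_explored gi).
by case: (hw) => _ _ <- _; rewrite (realising_walk_start hw).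
Qed.

Lemma g_nonneg ex x : g_inv ex -> isSome (ex x) -> 0 <= g_of ex x.
Proof. by move=> gi /(g_walk gi) [w [_ _ <- _]]; apply: pcost_ge0. Qed.


Lemma backchain_transfer ex ex' x l : backchain S ex x l ->
  (forall y N, y \in l -> ex y = Some N ->
     exists N', ex' y = Some N' /\ nparent N' = nparent N) ->
  backchain S ex' x l.
Proof.
elim=> [|q N p l0 hq hN hp hb IH] H; first exact: bc_init.
have [N' [h1 h2]] := H q N (mem_head _ _) hN.
apply: (bc_step hq h1); first by rewrite h2 hp.
by apply: IH => y M hy; apply: H; rewrite inE hy orbT.
Qed.

Lemma backchain_g_le ex x l : g_inv ex -> backchain S ex x l ->
  forall y, y \in l -> g_of ex y <= g_of ex x.
Proof.
move=> gi; elim=> [|q N p l0 hq hN hp hb IH] y; first by rewrite inE => /eqP ->.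
rewrite inE => /orP [/eqP ->//|/IH hy].
have [p' [e1 _ _ hle]] := g_parent gi hN hq.
move: e1 hle; rewrite hp => -[<-] hle; rewrite (g_ofE hN).
by apply: le_trans hy _; apply: le_trans hle; rewrite lerDl.
Qed.

Lemma backchain_splice ex ex' x l qt lt : backchain S ex x l -> qt \in l ->
  backchain S ex' qt lt -> (forall y, y != qt -> ex' y = ex y) ->
  exists l', backchain S ex' x l'.
Proof.
move=> hb hin hqt hoth; elim: hb hin => [|q N p l0 hq hN hp hb IH].
  by rewrite mem_seq1 => /eqP e; move: hqt; rewrite e => ?; exists lt.
rewrite inE; case: (eqVneq q qt) => [->|hne] /= hin; first by exists lt.
have [l' hl'] := IH hin; exists (q :: l').
by apply: (bc_step hq _ hp hl'); rewrite hoth.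
Qed.

Lemma backchain_path ex x l : g_inv ex -> backchain S ex x l -> isSome (ex x) ->
  exists r, [/\ rev l = S :: r, last S r = x, path conn S r & pc S r <= g_of ex x].
Proof.
move=> gi hb; elim: hb => [|q N p l0 hqS hN hp hb IH] _.
  by exists [::]; split => //; rewrite g_start.
have [p' [e1 hps hc hle]] := g_parent gi hN hqS.
move: e1 hle hc hps; rewrite hp => -[<-] hle hc hps.
have [r [e2 e3 e4 e5]] := IH hps.
exists (rcons r q); split.
- by rewrite rev_cons e2 rcons_cons.
- by rewrite last_rcons.
- by rewrite rcons_path e4 e3 hc.
- by rewrite pcost_rcons e3 (g_ofE hN); apply: le_trans hle; apply: lerD.
Qed.


Section SameUpdate.
Variables (ex : explored) (q : cfg) (N N' : node).
Hypotheses (hq : ex q = Some N) (hg : ng N' = ng N) (hp : nparent N' = nparent N).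

Lemma explored_upd_same x : isSome (upd ex q N' x) = isSome (ex x).
Proof. by rewrite updE; case: eqP => [->|]; rewrite ?hq. Qed.

Lemma g_of_upd_same x : g_of (upd ex q N') x = g_of ex x.
Proof. by rewrite /g_of updE; case: eqP => [->|]; rewrite ?hq. Qed.

Lemma g_inv_upd_same : g_inv ex -> g_inv (upd ex q N').
Proof.
case=> hS wk par bc; split.
- by rewrite explored_upd_same.
- move=> x; rewrite explored_upd_same => /wk [w hw]; exists w.
  apply: realising_walk_mono hw _ _ _ => [y|y _|]; rewrite ?explored_upd_same //.
  + by rewrite g_of_upd_same.
  + by rewrite g_of_upd_same.
- move=> x M /updP [[-> ->]|[_ hx]] hxS.
    have [p [h1 h2 h3 h4]] := par _ _ hq hxS; exists p.
    by rewrite hp hg explored_upd_same g_of_upd_same.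
  have [p [h1 h2 h3 h4]] := par _ _ hx hxS; exists p.
  by rewrite explored_upd_same g_of_upd_same.
- move=> x; rewrite explored_upd_same => /bc [l hl]; exists l.
  apply: backchain_transfer hl _ => y M _ hy.
  case: (eqVneq y q) => [eyq|hyq]; last by exists M; rewrite updE (negbTE hyq).
  by move: hy; rewrite eyq hq updE eqxx => -[<-]; exists N'.
Qed.

End SameUpdate.


(* Step 7: inserting a new node qn with parent q and g = g(q) + c_e(q, qn)
   keeps [g_inv]; the walk of qn extends the walk of q. *)
Section Insert.
Variables (ex : explored) (qn : cfg) (N0 : node).
Hypothesis hqn : ex qn = None.

Lemma insert_other y : isSome (ex y) -> upd ex qn N0 y = ex y.
Proof. by move=> hy; rewrite updE; case: eqP => // e; move: hy; rewrite e hqn. Qed.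

Lemma g_of_insert_other y : isSome (ex y) -> g_of (upd ex qn N0) y = g_of ex y.
Proof. by move=> hy; rewrite /g_of insert_other. Qed.

Lemma g_inv_new q Nq : ex q = Some Nq -> conn q qn -> nparent N0 = Some q ->
  ng N0 = ng Nq + ce q qn -> g_inv ex -> g_inv (upd ex qn N0).
Proof.
move=> hq hc hp0 hg0 [hS wk par bc].
have hqs : isSome (ex q) by rewrite hq.
have hnew : upd ex qn N0 qn = Some N0 by rewrite updE eqxx.
have mono w x : realising_walk ex x w -> realising_walk (upd ex qn N0) x w.
  move=> hw; have hx : isSome (ex x).
    by case: (hw) => _ hl _ _; apply: realising_walk_explored hw _; rewrite -hl mem_last.
  by apply: realising_walk_mono hw _ _ _ => [y hy|y hy|];
    rewrite ?insert_other ?g_of_insert_other.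
have keep l x : backchain S ex x l -> backchain S (upd ex qn N0) x l.
  move=> hb; apply: backchain_transfer hb _ => y N _ hy; exists N.
  by rewrite insert_other ?hy.
split; first by rewrite insert_other.
- move=> x; rewrite updE; case: eqP => [->|hx] hs; last first.
    by have [w hw] := wk _ hs; exists w; apply: mono.
  have [w hw] := wk q hqs; exists (rcons w qn); apply: realising_walk_rcons.
  + exact: mono hw.
  + by apply/negP => /(realising_walk_explored hw); rewrite hqn.
  + by rewrite hnew.
  + by rewrite (g_ofE hnew) g_of_insert_other // (g_ofE hq) hg0.
- move=> x N /updP [[-> ->] _|[hx hN] hxS].
    by exists q; rewrite insert_other // g_of_insert_other // (g_ofE hq) hg0.
  have [p [h1 h2 h3 h4]] := par _ _ hN hxS.
  by exists p; rewrite insert_other // g_of_insert_other.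
- move=> x; rewrite updE; case: eqP => [->|hx] hs; last first.
    by have [l hl] := bc _ hs; exists l; apply: keep.
  have [l hl] := bc q hqs; exists (qn :: l).
  apply: (bc_step _ hnew hp0 (keep _ _ hl)).
  by apply/eqP => e; move: hS; rewrite -e hqn.
Qed.

End Insert.


Section Relaxation.
Variables (ex : explored) (qf qt : cfg) (Nf Nt : node).
Hypotheses (hf : ex qf = Some Nf) (ht : ex qt = Some Nt) (hc : conn qf qt).
Let g' := g_of ex qf + ce qf qt.
Hypothesis hlt : g' < ng Nt.
Let ex' := upd ex qt (set_gp Nt g' qf).

Lemma relax_target_neq : qt != qf.
Proof.
apply/eqP => e; move: hlt; rewrite /g' e (g_ofE hf); move: ht; rewrite e hf => -[->].
by rewrite ltNge lerDl ce_ge0.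
Qed.

Lemma relax_source_neq : qf != qt.
Proof. by rewrite eq_sym relax_target_neq. Qed.

Lemma relax_other y : y != qt -> ex' y = ex y.
Proof. by rewrite /ex' updE => /negbTE ->. Qed.

Lemma relax_target : ex' qt = Some (set_gp Nt g' qf).
Proof. by rewrite /ex' updE eqxx. Qed.

Lemma explored_relax y : isSome (ex' y) = isSome (ex y).
Proof.
by case: (eqVneq y qt) => [->|hy]; [rewrite relax_target ht | rewrite relax_other].
Qed.

Lemma g_of_relax_other y : y != qt -> g_of ex' y = g_of ex y.
Proof. by move=> hy; rewrite /g_of relax_other. Qed.

Lemma g_of_relax_target : g_of ex' qt = g'.
Proof. by rewrite (g_ofE relax_target). Qed.

Lemma g_of_relax_le y : g_of ex' y <= g_of ex y.
Proof.
case: (eqVneq y qt) => [->|hy]; last by rewrite g_of_relax_other.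
by rewrite g_of_relax_target (g_ofE ht) ltW.
Qed.

Hypothesis gi : g_inv ex.

Lemma relax_target_neq_start : qt != S.
Proof.
apply/eqP => e; move: hlt; rewrite -(g_ofE ht) e (g_start gi) /g' ltNge addr_ge0 //.
by apply: g_nonneg; rewrite ?hf.
Qed.

(* qt cannot lie on the realising walk of qf: its g would be <= g(qf). *)
Lemma relax_walk w : realising_walk ex qf w -> realising_walk ex' qt (rcons w qt).
Proof.
move=> hw; apply: realising_walk_rcons.
- apply: realising_walk_mono hw _ _ _ => [y|y _|]; rewrite ?explored_relax //.
    exact: g_of_relax_le.
  by rewrite g_of_relax_other // relax_source_neq.
- apply/negP => /mem_last_take [k hk hl]; case: hw => _ _ hpw H.
  have [_] := H k hk; rewrite hl => hle.
  have := le_trans hle (pcost_take _ _ _); rewrite hpw (g_ofE ht) => hle2.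
  by move: hlt; rewrite /g' ltNge (le_trans hle2) // lerDl ce_ge0.
- by rewrite relax_target.
- by rewrite g_of_relax_target g_of_relax_other // relax_source_neq.
Qed.

(* The chain of qf does not contain qt (again by comparing g-values), so qt
   followed by the chain of qf is a chain, and chains through qt reroute. *)
Lemma relax_chain x : isSome (ex x) -> exists l, backchain S ex' x l.
Proof.
have [lf hlf] : exists l, backchain S ex qf l by apply: (g_chain gi); rewrite hf.
have hnin : qt \notin lf.
  apply/negP => /(backchain_g_le gi hlf); rewrite (g_ofE ht).
  by apply/negP; rewrite -ltNge; apply: le_lt_trans hlt; rewrite lerDl.
have keep l y : backchain S ex y l -> qt \notin l -> backchain S ex' y l.
  move=> hb hn; apply: backchain_transfer hb _ => z N hz hzN; exists N.
  by rewrite relax_other //; apply: contraNneq hn => <-.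
have hqt : backchain S ex' qt (qt :: lf).
  exact: (bc_step relax_target_neq_start relax_target _ (keep _ _ hlf hnin)).
move=> /(g_chain gi) [l hl].
case: (boolP (qt \in l)) => hin; last by exists l; apply: keep.
exact: backchain_splice hl hin hqt relax_other.
Qed.

Lemma g_inv_relax : g_inv ex'.
Proof.
split.
- by rewrite explored_relax (start_explored gi).
- move=> x; rewrite explored_relax; case: (eqVneq x qt) => [->|hx] hs.
    have [w hw] : exists w, realising_walk ex qf w by apply: (g_walk gi); rewrite hf.
    by exists (rcons w qt); apply: relax_walk.
  have [w hw] := g_walk gi hs; exists w.
  apply: realising_walk_mono hw _ _ _ => [y|y _|]; rewrite ?explored_relax //.
    exact: g_of_relax_le.
  by rewrite g_of_relax_other.
- move=> x N; case: (eqVneq x qt) => [->|hx].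
    rewrite relax_target => -[<-] _; exists qf; split => //=.
    + by rewrite explored_relax hf.
    + by rewrite g_of_relax_other // relax_source_neq.
  rewrite relax_other // => hN hxS; have [p [h1 h2 h3 h4]] := g_parent gi hN hxS.
  exists p; split => //; first by rewrite explored_relax.
  exact: le_trans (lerD (g_of_relax_le p) (lexx _)) h4.
- by move=> x; rewrite explored_relax; apply: relax_chain.
Qed.

End Relaxation.


Fixpoint seqs_upto (k : nat) : seq (seq cfg) :=
  if k is k'.+1 then [::] :: [seq x :: s | x <- enum cfg, s <- seqs_upto k']
  else [:: [::]].

Lemma seqs_uptoP k (s : seq cfg) : (size s <= k)%N -> s \in seqs_upto k.
Proof.
elim: k s => [|k IH] [|x s] //= hs; rewrite inE; apply/orP; right.
by apply/allpairsP; exists (x, s); rewrite /= mem_enum IH.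
Qed.

(* The finitely many possible g-values: costs of duplicate-free walks from S. *)
Definition walk_costs : seq R := map (pc S) (seqs_upto #|{: cfg}|).

Lemma realising_walk_cost ex x w : realising_walk ex x w -> g_of ex x \in walk_costs.
Proof.
case=> hu _ <- _; apply: map_f; apply: seqs_uptoP.
have /card_uniqP e := hu; have := max_card (mem (S :: w)).
by rewrite e /= => /ltnW.
Qed.

Lemma count_lt_strict (s : seq R) a b : a < b -> a \in s ->
  (count (fun c => (c < a)%R) s < count (fun c => (c < b)%R) s)%N.
Proof.
move=> hab; elim: s => [|c s IH] //; rewrite inE => /orP [/eqP <-|hin] /=.
  rewrite ltxx hab add0n add1n ltnS.
  by apply: sub_count => v /= hv; apply: lt_trans hv hab.
have hc := IH hin; case ha: (c < a).
  by have -> : c < b by apply: lt_trans hab; rewrite ha.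
by case: (c < b); rewrite /= ?add0n ?add1n //; apply: ltnW.
Qed.

Definition rank (v : R) : nat := count (fun c => c < v) walk_costs.


(* Constraint nodes.  The tree of a node with agent order sigma only contains
   constraint nodes fixing, most recent first, the agents sigma(0), ...,
   sigma(k-1): the k first agents of the order. *)
Definition ordered_cnode (sigma : {perm 'I_n}) (C : cnode V n) :=
  map fst C = map sigma (rev (take (size C) (enum 'I_n))).

Lemma ordered_cnode_uniq sigma C : ordered_cnode sigma C -> uniq C /\ (size C <= n)%N.
Proof.
move=> hC; split.
  apply: (@map_uniq _ _ fst); rewrite hC map_inj_uniq; last exact: perm_inj.
  by rewrite rev_uniq take_uniq // enum_uniq.
have := congr1 size hC; rewrite !size_map size_rev size_take size_enum_ord.
by case: ifP => [hh _|_ e] //; [apply: ltnW | apply: eq_leq; exact: e].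
Qed.

Lemma ordered_cnode_child sigma C k u : ordered_cnode sigma C -> val k = size C ->
  ordered_cnode sigma ((sigma k, u) :: C).
Proof.
move=> hC hk; rewrite /ordered_cnode /= hC.
have hlt : (size C < size (enum 'I_n))%N by rewrite size_enum_ord -hk ltn_ord.
by rewrite (take_nth k hlt) rev_rcons /= -hk nth_ord_enum.
Qed.

Lemma ordered_cnode_full sigma C : ordered_cnode sigma C -> size C = n ->
  forall i, exists u, (i, u) \in C.
Proof.
move=> hC hn i; have : i \in map fst C.
  rewrite hC hn take_oversize ?size_enum_ord //.
  by apply/mapP; exists (perm_inv sigma i); rewrite ?mem_rev ?mem_enum ?permKV.
by move=> /mapP [[j u] hju /= ->]; exists u.
Qed.

Lemma child_agentP N C : ordered_cnode (norder N) C ->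
  (exists2 k : 'I_n, val k = size C & child_agent N C = Some (norder N k)) \/
  (child_agent N C = None /\ size C = n).
Proof.
move=> hC; have [hu hle] := ordered_cnode_uniq hC.
rewrite /child_agent /depth (undup_id hu).
case: insubP => [k hk ek|hk]; first by left; exists k.
by right; split => //; apply/eqP; rewrite eqn_leq hle leqNgt.
Qed.


Definition satisfies (Q : cfg) (C : cnode V n) := forall i u, (i, u) \in C -> Q i = u.

(* Weight of a tree: a constraint node of depth d weighs K^(n-d).  Step 4
   replaces a node by at most #|V| < K nodes of depth d+1 (or by none when
   d = n), so the weight strictly decreases. *)
Definition K := #|V|.+1.
Definition tree_weight N : nat := (\sum_(C <- ntree N) K ^ (n - size C))%N.

Definition dequeued N tr C us := set_tree N (tr ++ children N C us).

Section Dequeue.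
Variables (q : cfg) (N : node) (C : cnode V n) (tr : seq (cnode V n)) (us : seq V).
Hypotheses (htr : ntree N = C :: tr) (hok : children_ok adj N q C us).
Hypothesis hord : forall C', C' \in ntree N -> ordered_cnode (norder N) C'.

Let hC : ordered_cnode (norder N) C.
Proof. by apply: hord; rewrite htr mem_head. Qed.

Let htr' C' : C' \in tr -> ordered_cnode (norder N) C'.
Proof. by move=> hC'; apply: hord; rewrite htr in_cons hC' orbT. Qed.

Lemma dequeue_ordered C' : C' \in ntree (dequeued N tr C us) ->
  ordered_cnode (norder N) C'.
Proof.
rewrite /= /children; case: (child_agentP hC) => [[k hk ->]|[-> _]].
  by rewrite mem_cat => /orP [/htr'//|/mapP [u _ ->]]; apply: ordered_cnode_child.
by rewrite cats0; apply: htr'.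
Qed.

Lemma dequeue_weight : (tree_weight (dequeued N tr C us) < tree_weight N)%N.
Proof.
rewrite /tree_weight /= htr big_cons /children; move: hok; rewrite /children_ok.
case: (child_agentP hC) => [[k hk ->]|[-> _]] hus; last first.
  by rewrite cats0 -{1}(add0n (\sum_(_ <- tr) _)%N) ltn_add2r expn_gt0.
rewrite big_cat big_map /= addnC ltn_add2r.
have hlt : (size C < n)%N by rewrite -hk ltn_ord.
rewrite -(subnSK hlt) expnS big_const_seq count_predT iter_addn_0 mulnC.
rewrite ltn_pmul2r ?expn_gt0 // (perm_size hus).
by rewrite size_filter /K ltnS (leq_trans (count_size _ _)) // cardE.
Qed.

Lemma dequeue_cover Q : conn q Q ->
  Q \in nnbrs N \/ (exists2 C', C' \in ntree N & satisfies Q C') ->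
  Q \in nnbrs N \/ (exists2 C', C' \in ntree (dequeued N tr C us) & satisfies Q C') \/
  gen q C = Some Q.
Proof.
move=> hQ [->|[C' hC' hsat]]; first by left.
move: hC'; rewrite htr in_cons => /orP [/eqP eC|hin]; last first.
  right; left; exists C' => //; rewrite /= mem_cat hin //.
subst C'; move: hok; rewrite /children_ok /dequeued /= /children.
case: (child_agentP hC) => [[k hk ->]|[-> hn]] hus.
  right; left; exists ((norder N k, Q (norder N k)) :: C).
    rewrite mem_cat; apply/orP; right; apply/mapP; exists (Q (norder N k)) => //.
    rewrite (perm_mem hus) mem_filter mem_enum andbT.
    by move: hQ => /andP [/forallP /(_ (norder N k)) /orP [/eqP ->|->] _]; rewrite ?eqxx ?orbT.
  by move=> i u; rewrite in_cons => /orP [/eqP [-> ->] //|]; apply: hsat.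
right; right; have [hg1 hg2] := hgen q C.
have hall i u : ((i, u) \in C) = (Q i == u).
  apply/idP/eqP => [/hsat //|<-].
  by have [u' hu'] := ordered_cnode_full hC hn i; rewrite (hsat _ _ hu').
case E: (gen q C) => [qn|]; last by have := hg2 Q hall hQ; rewrite E.
have [_ hqn] := hg1 qn E; congr Some; apply/ffunP => i.
by have [u' hu'] := ordered_cnode_full hC hn i; rewrite (hqn _ _ hu') (hsat _ _ hu').
Qed.

End Dequeue.


(* Structural invariant of EXPLORED.  [pending] holds for the configurations
   in the Dijkstra queue, whose neighbours may not be relaxed yet:
   - the trees only contain constraint nodes ordered as above;
   - neighbours are explored, connected, and relaxed unless pending;
   - every configuration connected to x is a neighbour of x or satisfies
     some constraint node still in the tree of x. *)
Record search_inv ex (pending : pred cfg) : Prop := SearchInv {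
  inv_g : g_inv ex;
  inv_ordered : forall x N, ex x = Some N ->
    forall C, C \in ntree N -> ordered_cnode (norder N) C;
  inv_nbrs : forall x N, ex x = Some N -> forall y, y \in nnbrs N ->
    [/\ conn x y, isSome (ex y) & (~~ pending x -> g_of ex y <= ng N + ce x y)];
  inv_cover : forall x N, ex x = Some N -> forall Q, conn x Q ->
    Q \in nnbrs N \/ exists2 C, C \in ntree N & satisfies Q C }.

Lemma search_inv_mono ex (E E' : pred cfg) :
  (forall x, E x -> E' x) -> search_inv ex E -> search_inv ex E'.
Proof.
move=> hE [gi ord nb cov]; split => // x N hN y hy.
have [h1 h2 h3] := nb x N hN y hy; split => // hx; apply: h3.
by apply: contra hx; apply: hE.
Qed.

Record open_inv ex (op : seq cfg) (goal : option cfg) : Prop := OpenInv {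
  open_explored : forall x, x \in op -> isSome (ex x);
  closed_done : forall x N, ex x = Some N -> x \notin op ->
    ntree N = [::] \/ (goal = Some G /\ f_of h ex G <= f_of h ex x);
  goal_is_G : forall qg, goal = Some qg -> qg = G /\ isSome (ex G);
  goal_open : goal = None -> isSome (ex G) -> G \in op }.

Lemma g_inv_ext ex ex' : ex =1 ex' -> g_inv ex -> g_inv ex'.
Proof.
move=> e [hS wk par bc]; have eg y : g_of ex' y = g_of ex y by rewrite /g_of e.
split; first by rewrite -e.
- move=> x; rewrite -e => /wk [w hw]; exists w.
  by apply: realising_walk_mono hw _ _ _ => [y|y _|]; rewrite -?e ?eg.
- move=> x N; rewrite -e => hN /(par _ _ hN) [p [h1 h2 h3 h4]].
  by exists p; rewrite -e eg.
- move=> x; rewrite -e => /bc [l hl]; exists l.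
  by apply: backchain_transfer hl _ => y N _ hy; exists N; rewrite -e.
Qed.

Lemma search_inv_ext ex ex' E : ex =1 ex' -> search_inv ex E -> search_inv ex' E.
Proof.
move=> e [gi ord nb cov]; have eg y : g_of ex' y = g_of ex y by rewrite /g_of e.
split; first exact: g_inv_ext gi.
- by move=> x N; rewrite -e; apply: ord.
- by move=> x N; rewrite -e => hN y /(nb _ _ hN) [h1 h2 h3]; rewrite -e eg.
- by move=> x N; rewrite -e; apply: cov.
Qed.

Section Expand.
Variables (ex : explored) (E : pred cfg) (q : cfg) (N N1 : node).
Variables (C : cnode V n) (tr : seq (cnode V n)) (us : seq V).
Hypotheses (hq : ex q = Some N) (htr : ntree N = C :: tr) (hok : children_ok adj N q C us).
Hypotheses (htree : ntree N1 = ntree (dequeued N tr C us)) (hord : norder N1 = norder N).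
Hypotheses (hg : ng N1 = ng N) (hp : nparent N1 = nparent N).
Hypothesis hnb_old : {subset nnbrs N <= nnbrs N1}.
Hypothesis hnb_new : forall y, y \in nnbrs N1 -> y \notin nnbrs N ->
  [/\ conn q y, isSome (ex y) & (~~ E q -> g_of ex y <= ng N + ce q y)].
Hypothesis hgen_nb : forall Q, gen q C = Some Q -> Q \in nnbrs N1.

Lemma search_inv_expand : search_inv ex E -> search_inv (upd ex q N1) E.
Proof.
case=> gi ord nb cov.
have ordN : forall C', C' \in ntree N -> ordered_cnode (norder N) C' := ord _ _ hq.
have hs := explored_upd_same N1 hq; have hgo := g_of_upd_same hq hg.
split; first exact: (g_inv_upd_same hq hg hp gi).
- move=> x M /updP [[_ ->]|[_ hx]]; last exact: ord hx.
  by rewrite htree hord; apply: dequeue_ordered.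
- move=> x M /updP [[-> ->]|[_ hx]] y hy; last first.
    by have [h1 h2 h3] := nb _ _ hx y hy; rewrite hs hgo.
  case: (boolP (y \in nnbrs N)) => hyN; last first.
    by have [h1 h2 h3] := hnb_new hy hyN; rewrite hs hgo hg.
  by have [h1 h2 h3] := nb _ _ hq y hyN; rewrite hs hgo hg.
- move=> x M /updP [[-> ->]|[_ hx]] Q hQ; last exact: cov hx Q hQ.
  case: (dequeue_cover htr hok ordN hQ (cov _ _ hq Q hQ)) => [hin|[[C' hC' hsat]|hgq]].
  + by left; apply: hnb_old.
  + by right; exists C'; rewrite ?htree.
  + by left; apply: hgen_nb.
Qed.

End Expand.


Definition fresh_node q (qn : cfg) (Nq : node) (sigma : {perm 'I_n}) : node :=
  Node [:: [::]] (Some q) [::] (ng Nq + ce q qn) sigma.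

Lemma search_inv_insert ex q qn Nq sigma E : ex qn = None -> ex q = Some Nq ->
  conn q qn -> search_inv ex E -> search_inv (upd ex qn (fresh_node q qn Nq sigma)) E.
Proof.
move=> hqn hq hc [gi ord nb cov]; split.
- exact: (@g_inv_new ex qn (fresh_node q qn Nq sigma) hqn q Nq hq hc erefl erefl gi).
- move=> x M /updP [[_ ->] D|[_ hx]]; last exact: ord hx.
  by rewrite mem_seq1 => /eqP ->; rewrite /ordered_cnode take0.
- move=> x M /updP [[_ ->] //|[_ hx]] y /(nb _ _ hx) [h1 h2 h3].
  by rewrite insert_other // g_of_insert_other.
- move=> x M /updP [[_ ->] Q _|[_ hx]]; last exact: cov hx.
  by right; exists [::]; rewrite ?mem_seq1.
Qed.

Lemma open_newgoal ex q op goal : isSome (ex q) -> open_inv ex (q :: op) goal ->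
  open_inv ex (q :: op) (newgoal G q goal).
Proof.
move=> hq [o1 o2 o3 o4]; rewrite /newgoal; split => //.
- move=> x N hN hx; case: (o2 x N hN hx) => [->|[-> hle]]; first by left.
  by right; case: ifP => [/eqP ->|].
- by move=> qg; case: ifP => [/eqP eq [<-]|_ /o3] //; rewrite -eq hq.
- by case: ifP => // _ /o4.
Qed.

Lemma open_upd_same ex q op goal N N' : ex q = Some N -> ng N' = ng N ->
  q \in op -> open_inv ex op goal -> open_inv (upd ex q N') op goal.
Proof.
move=> hq hg hqop [o1 o2 o3 o4].
have hs := explored_upd_same N' hq; have hgo := g_of_upd_same hq hg.
split.
- by move=> x; rewrite hs; apply: o1.
- move=> x M /updP [[-> _]|[_ hx]]; first by rewrite hqop.
  by rewrite /f_of !hgo; apply: o2.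
- by move=> qg; rewrite hs; apply: o3.
- by rewrite hs.
Qed.

Lemma open_insert ex qn op goal N0 : ex qn = None -> open_inv ex op goal ->
  open_inv (upd ex qn N0) (qn :: op) goal.
Proof.
move=> hqn [o1 o2 o3 o4].
have hs y : isSome (upd ex qn N0 y) = (y == qn) || isSome (ex y).
  by rewrite updE; case: eqP.
have hf y : isSome (ex y) -> f_of h (upd ex qn N0) y = f_of h ex y.
  by move=> hy; rewrite /f_of g_of_insert_other.
split.
- by move=> x; rewrite in_cons hs => /orP [->|/o1 ->]; rewrite ?orbT.
- move=> x M /updP [[-> _]|[hx hxM]]; first by rewrite mem_head.
  rewrite in_cons (negbTE hx) /= => hnin; case: (o2 _ _ hxM hnin) => [|[hg hle]].
    by left.
  by right; rewrite !hf ?hxM //; have [_] := o3 _ hg.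
- by move=> qg /o3 [-> hG]; rewrite hs hG orbT.
- move=> hng; rewrite hs in_cons => /orP [-> //|/(o4 hng) ->]; exact: orbT.
Qed.

Lemma open_pop ex q op goal N : ex q = Some N ->
  stop_cond h ex q (newgoal G q goal) \/ ntree N = [::] ->
  open_inv ex (q :: op) goal -> open_inv ex op (newgoal G q goal).
Proof.
move=> hq hcut hO; have hqs : isSome (ex q) by rewrite hq.
have [p1 p2 p3 p4] := open_newgoal hqs hO; split.
- by move=> x hx; apply: p1; rewrite in_cons hx orbT.
- move=> x M hx hnin; case: (eqVneq x q) => [exq|hxq]; last first.
    by apply: p2 hx _; rewrite in_cons negb_or hxq.
  move: hx; rewrite exq hq => -[<-]; case: hcut => [|->]; last by left.
  rewrite /stop_cond; case E: (newgoal G q goal) => [qg|] // hle.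
  by have [eG _] := p3 qg E; right; rewrite -eG.
- exact: p3.
- move=> hng hG; have := p4 hng hG; rewrite in_cons => /orP [/eqP eGq|] //.
  by move: hng; rewrite /newgoal -eGq eqxx.
Qed.


Definition unexplored (o : option node) : nat := if o then 0 else 1.
Definition g_rank (o : option node) : nat := if o is Some N then rank (ng N) else 0.
Definition tree_size (o : option node) : nat := if o is Some N then tree_weight N else 0.

Definition expand_progress ex ex' :=
  [/\ pot unexplored ex' = pot unexplored ex, pot g_rank ex' = pot g_rank ex &
      (pot tree_size ex' < pot tree_size ex)%N].

Definition dijk_progress ex ex' :=
  [/\ pot unexplored ex' = pot unexplored ex, pot tree_size ex' = pot tree_size ex &
      (pot g_rank ex' < pot g_rank ex)%N].

(* The Dijkstra update: while processing qf from the queue D, the nodes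
   whose neighbours may be unrelaxed are qf and those of D. *)
Definition pending_of qf (D : seq cfg) : pred cfg := fun x => (x == qf) || (x \in D).

Section RelaxStep.
Variables (goal : option cfg) (ex : explored) (D op : seq cfg) (qf qt : cfg).
Variables (Nf Nt : node).
Hypotheses (hf : ex qf = Some Nf) (ht : ex qt = Some Nt) (hc : conn qf qt).
Let g' := g_of ex qf + ce qf qt.
Hypothesis hlt : g' < ng Nt.
Let ex' := upd ex qt (set_gp Nt g' qf).
Let op' := if goal is Some qg then
             (if f_of h ex' qt < f_of h ex' qg then qt :: op else op) else op.

Lemma relaxE : relax ce h goal qf (ex, D, op) qt = (ex', qt :: D, op').
Proof. by rewrite /relax ht -/g' hlt. Qed.

Lemma relax_search_inv : search_inv ex (pending_of qf D) ->
  search_inv ex' (pending_of qf (qt :: D)).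
Proof.
case=> gi ord nb cov; split; first exact: g_inv_relax hf ht hc hlt gi.
- move=> x M /updP [[_ ->]|[_ hx]]; [exact: ord ht | exact: ord hx].
- move=> x M /updP [[-> ->]|[hx hxM]] y hy.
    have [h1 h2 _] := nb _ _ ht y hy.
    by rewrite (explored_relax qf ht) /pending_of in_cons eqxx orbT.
  have [h1 h2 h3] := nb _ _ hxM y hy; rewrite (explored_relax qf ht); split => // hE.
  apply: le_trans (g_of_relax_le ht hlt y) _; apply: h3; move: hE.
  by rewrite /pending_of in_cons (negbTE hx).
- move=> x M /updP [[-> ->]|[_ hx]]; [exact: cov ht | exact: cov hx].
Qed.

Lemma relax_open_inv : open_inv ex op goal -> open_inv ex' op' goal.
Proof.
case=> o1 o2 o3 o4.
have hop : {subset op <= op'}.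
  by rewrite /op'; case: goal {o2 o3 o4} => // qg y hy; case: ifP; rewrite ?in_cons hy ?orbT.
have fG : f_of h ex' G <= f_of h ex G by rewrite /f_of lerD2r g_of_relax_le.
split.
- move=> x; rewrite (explored_relax qf ht) /op'.
  case: goal {o2 o3 o4 hop} => [qg|]; last exact: o1.
  case: ifP => _; last exact: o1.
  by rewrite in_cons => /orP [/eqP ->|/o1 //]; rewrite ht.
- move=> x M /updP [[-> ->]|[hx hxM]] hnin.
    case: (o2 _ _ ht (contra (@hop _) hnin)) => [->|[hg hle]]; first by left.
    right; split => //; move: hnin; rewrite /op' hg.
    by case: ifP => [_|/negbT]; rewrite ?mem_head // -leNgt.
  case: (o2 _ _ hxM (contra (@hop _) hnin)) => [->|[hg hle]]; first by left.
  right; split => //; apply: le_trans fG (le_trans hle _).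
  by rewrite /f_of g_of_relax_other.
- by move=> qg /o3 [-> hG]; rewrite (explored_relax qf ht).
- by move=> hg; rewrite (explored_relax qf ht) => /(o4 hg) /hop.
Qed.

(* The g-value of qt strictly decreases, to another possible g-value. *)
Lemma relax_potentials : g_inv ex -> dijk_progress ex ex'.
Proof.
move=> gi; split; try by apply: pot_upd_eq; rewrite ht.
apply: pot_upd_lt; rewrite ht /=; apply: count_lt_strict => //.
have [w hw] : exists w, realising_walk ex qf w by apply: (g_walk gi); rewrite hf.
by have := realising_walk_cost (relax_walk hf ht hlt hw); rewrite g_of_relax_target.
Qed.

End RelaxStep.


Definition relaxed ex qf y := isSome (ex y) /\ g_of ex y <= g_of ex qf + ce qf y.

Definition relax_mono qf ex ex' :=
  [/\ forall y, isSome (ex' y) = isSome (ex y), forall y, g_of ex' y <= g_of ex y,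
      g_of ex' qf = g_of ex qf & nbrs_of ex' qf = nbrs_of ex qf].

Lemma relaxed_mono qf ex ex' y : relax_mono qf ex ex' -> relaxed ex qf y -> relaxed ex' qf y.
Proof.
by case=> e1 e2 e3 _ [h1 h2]; split; rewrite ?e1 ?e3 //; apply: le_trans (e2 y) h2.
Qed.

Lemma relax_mono_trans qf ex1 ex2 ex3 :
  relax_mono qf ex1 ex2 -> relax_mono qf ex2 ex3 -> relax_mono qf ex1 ex3.
Proof.
case=> a1 b1 c1 d1 [a2 b2 c2 d2]; split => [y|y||]; rewrite ?a2 ?c2 ?d2 //.
exact: le_trans (b2 y) (b1 y).
Qed.

Lemma relax_ok goal qf ex D op qt : qt \in nbrs_of ex qf ->
  search_inv ex (pending_of qf D) -> open_inv ex op goal ->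
  let acc := relax ce h goal qf (ex, D, op) qt in
  [/\ search_inv acc.1.1 (pending_of qf acc.1.2), open_inv acc.1.1 acc.2 goal,
      acc = (ex, D, op) \/ dijk_progress ex acc.1.1,
      relax_mono qf ex acc.1.1 & relaxed acc.1.1 qf qt].
Proof.
rewrite /nbrs_of; case hf: (ex qf) => [Nf|] // hqt hS hO.
have [hc hts _] := inv_nbrs hS hf hqt.
case ht: (ex qt) hts => [Nt|] // _.
case: (ltP (g_of ex qf + ce qf qt) (ng Nt)) => hlt; last first.
  rewrite /relax ht ltNge hlt /=; split => //; first by left.
  by split; rewrite ?ht // (g_ofE ht).
have hne := relax_source_neq hf ht hlt.
rewrite (relaxE _ _ _ ht hlt) /=; split.
- exact: (relax_search_inv hf ht hc hlt hS).
- exact: (relax_open_inv ht hlt hO).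
- by right; exact: (relax_potentials hf ht hlt (inv_g hS)).
- split => [y|y||]; rewrite ?(explored_relax qf ht) ?(g_of_relax_le ht hlt) //.
    exact: g_of_relax_other.
  by rewrite /nbrs_of relax_other.
- split; first by rewrite (explored_relax qf ht) ht.
  by rewrite g_of_relax_target g_of_relax_other.
Qed.


Lemma dijk_progress_trans ex1 ex2 ex3 :
  dijk_progress ex1 ex2 -> dijk_progress ex2 ex3 -> dijk_progress ex1 ex3.
Proof. by case=> a1 b1 c1 [a2 b2 c2]; split; rewrite ?a2 ?b2 //; apply: ltn_trans c1. Qed.

Lemma relax_fold_ok goal qf s : forall ex D op, {subset s <= nbrs_of ex qf} ->
  search_inv ex (pending_of qf D) -> open_inv ex op goal ->
  let acc := foldl (relax ce h goal qf) (ex, D, op) s in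
  [/\ search_inv acc.1.1 (pending_of qf acc.1.2), open_inv acc.1.1 acc.2 goal,
      acc = (ex, D, op) \/ dijk_progress ex acc.1.1,
      relax_mono qf ex acc.1.1 & forall y, y \in s -> relaxed acc.1.1 qf y].
Proof.
elim: s => [|y s IH] ex D op hsub hS hO /=; first by split => //; left.
have hy : y \in nbrs_of ex qf by apply: hsub; rewrite mem_head.
have := relax_ok hy hS hO.
case: (relax ce h goal qf (ex, D, op) y) => [[ex1 D1] op1] /= [hS1 hO1 hp1 hm1 hr1].
have hsub1 : {subset s <= nbrs_of ex1 qf}.
  by case: hm1 => _ _ _ e z hz; rewrite e; apply: hsub; rewrite in_cons hz orbT.
have [hS2 hO2 hp2 hm2 hr2] := IH ex1 D1 op1 hsub1 hS1 hO1; split => //.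
- case: hp1 => [e|hp1]; first by move: hp2; case: e => -> -> ->.
  by right; case: hp2 => [->|]; last apply: dijk_progress_trans.
- exact: relax_mono_trans hm1 hm2.
- by move=> z /[!in_cons] /orP [/eqP ->|/hr2]; [apply: relaxed_mono hr1|].
Qed.

Lemma search_inv_drop ex qf (E : pred cfg) : search_inv ex (fun x => (x == qf) || E x) ->
  (forall y, y \in nbrs_of ex qf -> relaxed ex qf y) -> search_inv ex E.
Proof.
case=> gi ord nb cov hr; split => // x N hN y hy.
have [h1 h2 h3] := nb x N hN y hy; split => // hE.
case: (eqVneq x qf) => [exq|hxq]; last by apply: h3; rewrite (negbTE hxq).
subst x; have [_] : relaxed ex qf y by apply: hr; rewrite /nbrs_of hN.
by rewrite (g_ofE hN).
Qed.


Definition queue_of (ph : phase V n) : seq cfg := if ph is Dijk D then D else [::].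

Definition state_inv (s : state V n R) : Prop :=
  search_inv (sexp s) (fun x => x \in queue_of (sphase s)) /\
  open_inv (sexp s) (sopen s) (sgoal s).

Lemma dijk_step_ok ex op goal D qf : qf \in D -> state_inv (St ex op goal (Dijk D)) ->
  let r := dijk_res ce h ex op goal D qf in
  state_inv (St r.1.1 r.2 goal (Dijk r.1.2)) /\
  (r = (ex, rem qf D, op) \/ dijk_progress ex r.1.1).
Proof.
move=> hqf [hS hO] r.
have hS' : search_inv ex (pending_of qf (rem qf D)).
  apply: search_inv_mono hS => x /= hx; rewrite /pending_of.
  by case: (eqVneq x qf) => //= hne; apply: rem_mem.
have [hS1 hO1 hp hm hr] := relax_fold_ok (fun y hy => hy) hS' hO.
split => //; split => //=; apply: search_inv_drop hS1 _.
by case: hm => _ _ _ ->.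
Qed.

Lemma pop_ok ex q op goal N : ex q = Some N ->
  stop_cond h ex q (newgoal G q goal) \/ ntree N = [::] ->
  state_inv (St ex (q :: op) goal Main) -> state_inv (St ex op (newgoal G q goal) Main).
Proof. by move=> hq hcut [hS hO]; split => //; apply: open_pop hq hcut hO. Qed.


Section ExpandSteps.
Variables (ex : explored) (q : cfg) (op : seq cfg) (goal : option cfg) (N : node).
Variables (C : cnode V n) (tr : seq (cnode V n)) (us : seq V).
Hypotheses (hq : ex q = Some N) (htr : ntree N = C :: tr) (hok : children_ok adj N q C us).
Hypothesis hI : state_inv (St ex (q :: op) goal Main).
Let N1 := dequeued N tr C us.

Let hqs : isSome (ex q). Proof. by rewrite hq. Qed.

Let open_expand N' : ng N' = ng N -> open_inv (upd ex q N') (q :: op) (newgoal G q goal).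
Proof. by move=> hg; apply: open_upd_same hq hg (mem_head _ _) (open_newgoal hqs hI.2). Qed.

(* Steps 4-6 only change the tree and the neighbours of q. *)
Let expand_potentials N' : ntree N' = ntree N1 -> ng N' = ng N ->
  expand_progress ex (upd ex q N').
Proof.
move=> ht hg; split; try by apply: pot_upd_eq; rewrite hq //= hg.
apply: pot_upd_lt; rewrite hq /= /tree_weight ht.
exact: dequeue_weight htr hok (inv_ordered hI.1 hq).
Qed.

Lemma nogen_ok : gen q C = None ->
  state_inv (St (upd ex q N1) (q :: op) (newgoal G q goal) Main) /\
  expand_progress ex (upd ex q N1).
Proof.
move=> hgq; split; last exact: expand_potentials.
split; last exact: open_expand.
apply: (search_inv_expand hq htr hok _ _ _ _ _ _ _ hI.1) => //.
- by move=> y ->.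
- by move=> Q; rewrite hgq.
Qed.

Lemma old_ok qn : gen q C = Some qn -> upd ex q N1 qn <> None ->
  state_inv (St (upd ex q (add_nbr N1 qn)) (q :: op) (newgoal G q goal) (Dijk [:: q])) /\
  expand_progress ex (upd ex q (add_nbr N1 qn)).
Proof.
move=> hgq hqn; split; last exact: expand_potentials.
split; last exact: open_expand.
have [hcq _] := (hgen q C).1 qn hgq.
have hqn' : isSome (ex qn).
  by move: hqn; rewrite updE; case: eqP => [->|_]; rewrite ?hq //; case: (ex qn).
have hS : search_inv ex (fun x => x \in [:: q]) by apply: search_inv_mono hI.1.
apply: (search_inv_expand hq htr hok _ _ _ _ _ _ _ hS) => //=.
- by move=> y hy; rewrite mem_rcons in_cons hy orbT.
- by move=> y; rewrite mem_rcons in_cons => /orP [/eqP ->|->] //; rewrite mem_seq1 eqxx.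
- by move=> Q; rewrite hgq => -[<-]; rewrite mem_rcons mem_head.
Qed.

Lemma new_ok qn sigma : gen q C = Some qn -> upd ex q N1 qn = None ->
  let ex' := upd (upd ex q (add_nbr N1 qn)) qn (fresh_node q qn N sigma) in
  state_inv (St ex' (qn :: q :: op) (newgoal G q goal) Main) /\
  (pot unexplored ex' < pot unexplored ex)%N.
Proof.
move=> hgq hqn ex'; have [hcq _] := (hgen q C).1 qn hgq.
have hqnq : qn != q by apply/eqP => e; move: hqn; rewrite e updE eqxx.
have hexqn : ex qn = None by move: hqn; rewrite updE (negbTE hqnq).
have hqn1 : upd ex q (add_nbr N1 qn) qn = None by rewrite updE (negbTE hqnq).
split; last first.
  have e1 : pot unexplored (upd ex q (add_nbr N1 qn)) = pot unexplored ex.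
    by apply: pot_upd_eq; rewrite hq.
  by rewrite -e1; apply: pot_upd_lt; rewrite hqn1.
split; last first.
  exact: open_insert hqn1 (@open_expand (add_nbr N1 qn) erefl).
(* insert qn first, then expand q; both orders give the same map *)
set ex1 := upd ex qn (fresh_node q qn N sigma).
have hq1 : ex1 q = Some N by rewrite /ex1 updE eq_sym (negbTE hqnq).
have hqn1' : ex1 qn = Some (fresh_node q qn N sigma) by rewrite /ex1 updE eqxx.
have hS1 : search_inv ex1 (fun x => x \in [::]) := search_inv_insert sigma hexqn hq hcq hI.1.
apply: (@search_inv_ext (upd ex1 q (add_nbr N1 qn))).
  move=> x /=; rewrite /ex' /ex1 !updE.
  by case: (eqVneq x q) => [->|//]; rewrite eq_sym (negbTE hqnq).
apply: (search_inv_expand hq1 htr hok _ _ _ _ _ _ _ hS1) => //=.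
- by move=> y hy; rewrite mem_rcons in_cons hy orbT.
- move=> y; rewrite mem_rcons in_cons => /orP [/eqP ->|->] //.
  by rewrite hqn1' (g_ofE hqn1').
- by move=> Q; rewrite hgq => -[<-]; rewrite mem_rcons mem_head.
Qed.

End ExpandSteps.


Definition measure (s : state V n R) : nat * nat * nat * nat * nat :=
  let: St ex op _ ph := s in
  (pot unexplored ex, pot g_rank ex, pot tree_size ex, size op,
   if ph is Dijk D then (size D).+1 else 0%N).

Lemma step_ok s t : state_inv s -> lstep adj ce G h gen s t ->
  state_inv t /\ lex5 (measure t) (measure s).
Proof.
move=> hI hst; case: hst hI.
- move=> ex q op goal N hq hcut hI; split; first exact: pop_ok hq hcut hI.
  by do 3!(right; split => //); left.
- move=> ex q op goal N C tr us hq _ htr hok hgq hI.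
  have [hI' [e1 e2 lt3]] := nogen_ok hq htr hok hI hgq.
  by split => //=; rewrite e1 e2; do 2!(right; split => //); left.
- move=> ex q op goal N C tr us qn hq _ htr hok hgq hqn hI.
  have [hI' [e1 e2 lt3]] := old_ok hq htr hok hI hgq hqn.
  by split => //=; rewrite e1 e2; do 2!(right; split => //); left.
- move=> ex q op goal N C tr us qn sigma hq _ htr hok hgq hqn hI.
  by have [hI' lt1] := new_ok hq htr hok hI sigma hgq hqn; split => //; left.
- move=> ex op goal D qf hqf _ hI.
  have [hI' hr] := dijk_step_ok hqf hI; split => //.
  case: hr => [-> /=|[e1 e2 lt2]] /=.
    do 4!(right; split => //); rewrite size_rem // ltnS.
    by case: (D) hqf.
  by rewrite e1 e2; right; split => //; left.
- by move=> ex op goal hI; split => //; do 4!(right; split => //).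
Qed.


Lemma init_ok sigma0 : state_inv (init_state S sigma0).
Proof.
rewrite /init_state; set N0 := Node [:: [::]] None [::] 0 sigma0.
set ex0 := fun x : cfg => if x == S then Some N0 else None.
have hS : ex0 S = Some N0 by rewrite /ex0 eqxx.
have hx x M : ex0 x = Some M -> x = S /\ M = N0 by rewrite /ex0; case: eqP => // -> [<-].
have hxs x : isSome (ex0 x) -> x = S by rewrite /ex0; case: eqP.
split; split => //=.
- split; first by rewrite hS.
  + move=> x /hxs ->; exists [::]; split; rewrite ?(g_ofE hS) // => k.
    by rewrite leqn0 => /eqP ->; rewrite hS (g_ofE hS).
  + by move=> x M /hx [-> _]; rewrite eqxx.
  + by move=> x /hxs ->; exists [:: S]; apply: bc_init.
- by move=> x M /hx [_ ->] C; rewrite mem_seq1 => /eqP ->; rewrite /ordered_cnode take0.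
- by move=> x M /hx [_ ->].
- by move=> x M /hx [_ ->] Q _; right; exists [::]; rewrite ?mem_seq1.
- by move=> x; rewrite mem_seq1 => /eqP ->; rewrite hS.
- by move=> x M /hx [-> _]; rewrite mem_seq1 eqxx.
- by move=> _ /hxs ->; rewrite mem_seq1.
Qed.


Lemma seq_argmin (T : eqType) (f : T -> R) (s : seq T) : s != [::] ->
  exists2 a, a \in s & forall b, b \in s -> f a <= f b.
Proof.
elim: s => [|d s IH] // _; case: (eqVneq s [::]) => [->|hs].
  by exists d; rewrite ?mem_head // => b; rewrite mem_seq1 => /eqP ->.
have [m hm hmin] := IH hs; case: (leP (f d) (f m)) => hdm.
  exists d; rewrite ?mem_head // => b; rewrite in_cons => /orP [/eqP ->//|/hmin].
  exact: le_trans.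
exists m; first by rewrite in_cons hm orbT.
by move=> b; rewrite in_cons => /orP [/eqP ->|/hmin //]; apply: ltW.
Qed.

Lemma progress s : state_inv s -> final s \/ exists t, lstep adj ce G h gen s t.
Proof.
case: s => ex op goal [|D] [_ hO]; last first.
  right; case: (eqVneq D [::]) => [->|hD]; first by eexists; apply: step_dijk_end.
  have [qf hqf hmin] := seq_argmin (g_of ex) hD.
  by eexists; apply: step_dijk hqf hmin.
case: op hO => [|q op] /= hO; [by left | right].
have hqs := open_explored hO (mem_head _ _); case hq: (ex q) hqs => [N|] // _.
case: (boolP (stop_cond h ex q (newgoal G q goal))) => hstop.
  by eexists; apply: step_pop hq _; left.
case htr: (ntree N) => [|C tr]; first by eexists; apply: step_pop hq _; right.
pose us := if child_agent N C is Some i then closed_nbhd V adj (q i) else [::].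
have hok : children_ok adj N q C us by rewrite /children_ok /us; case: child_agent.
case hg: (gen q C) => [qn|]; last by eexists; apply: step_nogen hq hstop htr hok hg.
case hu: (upd ex q (dequeued N tr C us) qn) => [M|].
  by eexists; apply: step_old hq hstop htr hok hg _; rewrite hu.
by eexists; apply: (step_new 1%g) hq hstop htr hok hg hu.
Qed.


Section Final.
Variables (ex : explored) (goal : option cfg).
Hypotheses (hS : search_inv ex (fun x => x \in [::])) (hO : open_inv ex [::] goal).

Lemma final_expanded x N y : ex x = Some N -> ntree N = [::] -> conn x y ->
  isSome (ex y) /\ g_of ex y <= ng N + ce x y.
Proof.
move=> hN ht hc; case: (inv_cover hS hN hc) => [hy|[C]]; last by rewrite ht.
by have [_ h2 h3] := inv_nbrs hS hN hy; split => //; apply: h3.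
Qed.

(* Without N_goal, all nodes were fully expanded, so everything reachable
   from S is explored; G would then be in OPEN. *)
Lemma final_no_solution : goal = None -> ~ exists sol, is_solution adj S G sol.
Proof.
move=> hng [[|q r] //= [-> [hl hp]]].
suff : isSome (ex G) by move/(goal_open hO hng).
elim: r (S) (start_explored (inv_g hS)) hp hl => [|y r IH] x hx /=; first by move=> _ <-.
case hN: (ex x) hx => [N|] // _ /andP [hc hpath] hlast.
case: (closed_done hO hN (negbT (in_nil x))) => [ht|[]]; last by rewrite hng.
by apply: IH hpath hlast; have [] := final_expanded hN ht hc.
Qed.

(* With N_goal = G, g(G) is at most the cost of any path to G from an
   explored node x, on top of g(x): follow the path while nodes are fully
   expanded; at a node cut by step 2, use f(G) <= f(x) and admissibility. *)
Lemma final_g_bound : goal = Some G -> forall r x, isSome (ex x) ->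
  path conn x r -> last x r = G -> g_of ex G <= g_of ex x + pc x r.
Proof.
move=> hg; elim=> [|y r IH] x hx; first by move=> _ /= ->; rewrite addr0.
case hN: (ex x) hx => [N|] // _ /= /andP [hc hpath] hlast.
case: (closed_done hO hN (negbT (in_nil x))) => [ht|[_ hle]].
  have [hy hgy] := final_expanded hN ht hc.
  apply: le_trans (IH y hy hpath hlast) _.
  by rewrite (g_ofE hN) addrA lerD2r.
have hadm_x := hadm (Q := x) (p := y :: r); rewrite /= hc hpath in hadm_x.
apply: le_trans (_ : f_of h ex G <= _); first by rewrite /f_of lerDl h_ge0.
by apply: le_trans hle _; rewrite /f_of (g_ofE hN) lerD2l; apply: hadm_x.
Qed.

Lemma final_output : output_correct adj ce S G (St ex [::] goal Main).
Proof.
rewrite /output_correct /=; case E: goal => [qg|]; last exact: final_no_solution.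
have [eqg hG] := goal_is_G hO E; subst qg.
have gi := inv_g hS; have [l hl] := g_chain gi hG; exists l.
have [r [e1 e2 e3 e4]] := backchain_path gi hl hG.
rewrite e1; split => //; split; first by split.
move=> [|q r'] //= [-> [hl' hp']]; apply: le_trans e4 _.
have := final_g_bound E (start_explored gi) hp' hl'.
by rewrite (g_start gi) add0r.
Qed.

End Final.


Lemma reach_inv sigma0 s : reach adj ce G h gen (init_state S sigma0) s -> state_inv s.
Proof.
elim=> [|t u _ IH hst]; first exact: init_ok.
by have [] := step_ok IH hst.
Qed.

End Search.

Unset Implicit Arguments.

Theorem theorem1 (V : finType) (adj : rel V) (n : nat) (R : realFieldType)
  (S G : config V n) (ce : config V n -> config V n -> R) (h : config V n -> R)
  (gen : config V n -> cnode V n -> option (config V n))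
  (sigma0 : {perm 'I_n}) :
  symmetric adj -> injective S -> injective G ->
  (forall X Y, 0 <= ce X Y) ->
  (forall Q, 0 <= h Q) -> @admissible V adj n R ce G h ->
  @valid_generator V adj n gen ->
  (* termination: no infinite run from the initial state ... *)
  Acc (fun t s => @lstep V adj n R ce G h gen s t) (@init_state V n R S sigma0) /\
  (* ... and no reachable state is stuck before OPEN is empty *)
  (forall s, @reach V adj n R ce G h gen (@init_state V n R S sigma0) s ->
     @final V n R s \/ exists t, @lstep V adj n R ce G h gen s t) /\
  (* completeness and optimality of the returned value *)
  (forall s, @reach V adj n R ce G h gen (@init_state V n R S sigma0) s ->
     @final V n R s -> @output_correct V adj n R ce S G s).
Proof.
move=> _ _ _ ce_ge0 h_ge0 hadm hgen; split; last split.
- exact: lex5_acc (step_ok ce_ge0 hgen) _ (init_ok adj S G ce h sigma0).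
- by move=> s /(reach_inv ce_ge0 hgen) /progress.
- move=> s /(reach_inv ce_ge0 hgen) [hS hO] [hph hop].
  case: s hph hop hS hO => ex op goal ph /= -> -> hS hO.
  exact: (final_output h_ge0 hadm hS hO).
Qed.
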